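(* Let $n=2m+1\ge 3$ be odd and consider the configuration of $n$ lighthouses with center point light sources described in the context. Then the dark region behind the target lighthouse $L_0$ is finite, and it is bounded by the arc of $L_0$ facing away from $P$ together with the two rays emitted from the centers of the two lighthouses furthest from $L_0$, namely $L_m$ and $L_{m+1}$, that are tangent to $L_0$ on its far side (these two rays meet on the line through $P$ and the center of $L_0$). No other lighthouse $L_i$ ($i\ne 0,m,m+1$) contributes to bounding this dark region.
   Context: Setup (''lighthouse problem with center point light sources''): fix an integer $n\ge 1$ and a point $P$ (the placement center). There are $n$ lighthouses $L_0,L_1,\dots,L_{n-1}$, each an opaque closed disk of radius $1$; the center of $L_k$ is at distance $n$ from $P$, at polar angle $2\pi k/n$ around $P$ (so $L_0$'s center $C$ lies $n$ units to the right of $P$, and the lighthouses are numbered counter-clockwise). The illumination angle is $\alpha=2\pi/n$. Each lighthouse has a single point light source at its center, emitting light along straight rays within the angular sector of total angle $\alpha$ symmetric about the direction from its center toward $P$ (for $n=1$ this means all directions). Light is blocked by the lighthouse disks. A point outside all disks is dark if no such ray reaches it. By symmetry every lighthouse has a congruent dark region behind it (on the side away from $P$); $d(n)$ denotes the area of the dark region behind one lighthouse and $D(n)=n\cdot d(n)$ is the total dark area. *)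

From Stdlib Require Import Reals Lra.
Open Scope R_scope.

(* Points of the plane; the placement center P is the origin (0,0). *)
Definition pt := (R * R)%type.

Definition center (n k : nat) : pt :=
  (INR n * cos (2 * PI * INR k / INR n), INR n * sin (2 * PI * INR k / INR n)).

Definition in_disk (n k : nat) (q : pt) : Prop :=
  (fst q - fst (center n k))^2 + (snd q - snd (center n k))^2 <= 1.

Definition outside_all (n : nat) (q : pt) : Prop :=
  forall k, (k < n)%nat -> ~ in_disk n k q.

Definition seg_meets (n j : nat) (a b : pt) : Prop :=
  exists t, 0 <= t <= 1 /\
    in_disk n j (fst a + t * (fst b - fst a), snd a + t * (snd b - snd a)).

(* The direction from the center of L_k to q lies in the emission sector:
   total angle alpha = 2*pi/n, symmetric about the direction towards P,
   i.e. the angle between q - c_k and P - c_k is at most pi/n. *)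
Definition in_sector (n k : nat) (q : pt) : Prop :=
  let ux := fst q - fst (center n k) in
  let uy := snd q - snd (center n k) in
  let vx := - fst (center n k) in
  let vy := - snd (center n k) in
  ux * vx + uy * vy >=
    sqrt (ux^2 + uy^2) * sqrt (vx^2 + vy^2) * cos (PI / INR n).

(* q is reached by a ray of the point source at the center of L_k:
   q in the sector and the segment from the source to q meets no other
   lighthouse disk (the source's own disk does not block its light). *)
Definition lit_by (n k : nat) (q : pt) : Prop :=
  in_sector n k q /\
  forall j, (j < n)%nat -> j <> k -> ~ seg_meets n j (center n k) q.

Definition dark (n : nat) (q : pt) : Prop :=
  outside_all n q /\ forall k, (k < n)%nat -> ~ lit_by n k q.

(* The region bounded by the far arc of L_0 and the two rays from the centers
   of L_m and L_(m+1) tangent to L_0 on its far side: the points outside all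
   disks lying in the shadow of L_0 with respect to both sources c_m, c_(m+1). *)
Definition tangent_region (n m : nat) (q : pt) : Prop :=
  outside_all n q /\
  seg_meets n 0 (center n m) q /\
  seg_meets n 0 (center n (m + 1)) q.

From Stdlib Require Import Reals Lra Lia Classical.
Open Scope R_scope.

(* Write h = PI/n.  The configuration is symmetric in the axis through P and
   c_0, which exchanges L_j and L_(n-j); the two farthest sources sit at
   c_m, c_(m+1) = (-n cos h, +-n sin h).  The emission sector of a source at
   angle th is the wedge between its edge rays at angles th +- h, i.e. an
   intersection of two half-planes.  A point of the region lies to the right
   of c_0 with |y| <= 1: L_0 faces away from it, L_m and L_(m+1) are blocked
   by L_0, and for 0 < k < m the edge ray of L_k at angle (2k+1)h passes above
   it because n sin h (2 cos h - 1) > 1 (the remaining sources by symmetry).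
   Conversely, just outside the region the light of L_m (or L_(m+1)) can only
   be blocked by L_0: every other disk lies more than one unit above or below
   the ray, since n sin h > 9/4.  The region is bounded because the shadow of
   L_0 seen from c_m lies below the line through c_m and the corner (n+1, 1)
   of the box around L_0. *)

(** * Trigonometric estimates *)

Lemma sin_ge_cubic x : 0 <= x <= PI -> x - x ^ 3 / 6 <= sin x.
Proof.
  intros Hx. destruct (SIN x) as [Hlb _]; try lra.
  unfold sin_lb, sin_approx in Hlb. cbn [sum_f_R0] in Hlb. unfold sin_term in Hlb.
  rewrite !INR_IZR_INZ in Hlb. cbn -[IZR pow] in Hlb.
  pose proof PI_4. assert (x ^ 2 <= 16) by nra.
  assert (0 <= x ^ 5 / 120 - x ^ 7 / 5040).
  { replace (x ^ 5 / 120 - x ^ 7 / 5040) with (x ^ 5 * (42 - x ^ 2) / 5040) by field.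
    apply Rmult_le_pos; [apply Rmult_le_pos; [apply pow_le|]|]; lra. }
  lra.
Qed.

Lemma cos_ge_quadratic x : 0 <= x <= PI / 2 -> 1 - x ^ 2 / 2 <= cos x.
Proof.
  intros Hx. destruct (COS x) as [Hlb _]; try lra.
  unfold cos_lb, cos_approx in Hlb. cbn [sum_f_R0] in Hlb. unfold cos_term in Hlb.
  rewrite !INR_IZR_INZ in Hlb. cbn -[IZR pow] in Hlb.
  pose proof PI_4. assert (x ^ 2 <= 4) by nra.
  assert (0 <= x ^ 4 / 24 - x ^ 6 / 720).
  { replace (x ^ 4 / 24 - x ^ 6 / 720) with (x ^ 4 * (30 - x ^ 2) / 720) by field.
    apply Rmult_le_pos; [apply Rmult_le_pos; [apply pow_le|]|]; lra. }
  lra.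
Qed.

Lemma PI_div_bounds N : 3 <= N -> 0 < PI / N <= PI / 3 /\ N * (PI / N) = PI.
Proof.
  intros HN. pose proof PI_RGT_0. split; [split|].
  - apply Rdiv_lt_0_compat; lra.
  - apply Rmult_le_compat_l; [lra|]. apply Rinv_le_contravar; lra.
  - field. lra.
Qed.

Lemma cos_PI_div_ge_half N : 3 <= N -> 1 / 2 <= cos (PI / N).
Proof.
  intros HN. destruct (PI_div_bounds N HN) as [Hh _]. pose proof PI_RGT_0.
  rewrite <- cos_PI3. apply cos_decr_1; lra.
Qed.

Lemma sin_PI_div_pos N : 3 <= N -> 0 < sin (PI / N).
Proof.
  intros HN. destruct (PI_div_bounds N HN) as [Hh _]. pose proof PI_RGT_0.
  apply sin_gt_0; lra.
Qed.

(* [N sin (PI/N) >= PI (1 - PI^2/54)] by the cubic bound, and [3 <= PI <= 4]. *)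
Lemma mul_sin_PI_div_gt N : 3 <= N -> 9 / 4 < N * sin (PI / N).
Proof.
  intros HN. destruct (PI_div_bounds N HN) as [[Hh0 Hh] HNh].
  pose proof PI_4. pose proof PI2_3_2.
  pose proof (sin_ge_cubic (PI / N) ltac:(lra)) as Hs.
  set (x := PI / N) in *. set (p := PI) in *. clearbody x p.
  assert (E : N * (x - x ^ 3 / 6) = p * (1 - x ^ 2 / 6)) by (rewrite <- HNh; field).
  assert (Hx2 : x ^ 2 <= p ^ 2 / 9) by nra.
  assert (p * (1 - x ^ 2 / 6) >= p * (1 - p ^ 2 / 54)) by nra.
  assert (0 <= (p - 3) * (45 - 3 * p - p ^ 2)) by (apply Rmult_le_pos; nra).
  nra.
Qed.

(* The product is at least [PI (1 - PI^2/150) (1 - PI^2/25)], by the cubic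
   bound on [sin] and [cos x >= 1 - x^2/2]. *)
Lemma mul_sin_PI_div_twice_cos_gt N : 5 <= N -> 1 < N * sin (PI / N) * (2 * cos (PI / N) - 1).
Proof.
  intros HN. destruct (PI_div_bounds N ltac:(lra)) as [[Hh0 _] HNh].
  pose proof PI_4. pose proof PI2_3_2.
  assert (Hh : PI / N <= PI / 5).
  { apply Rmult_le_compat_l; [lra|]. apply Rinv_le_contravar; lra. }
  pose proof (sin_ge_cubic (PI / N) ltac:(lra)) as Hs.
  pose proof (cos_ge_quadratic (PI / N) ltac:(lra)) as Hc.
  set (x := PI / N) in *. set (p := PI) in *. clearbody x p.
  assert (E : N * (x - x ^ 3 / 6) = p * (1 - x ^ 2 / 6)) by (rewrite <- HNh; field).
  assert (Hx2 : x ^ 2 <= p ^ 2 / 25) by nra.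
  assert (HS : N * sin x >= p * (1 - p ^ 2 / 150)) by nra.
  assert (HC : 2 * cos x - 1 >= 1 - p ^ 2 / 25) by nra.
  assert (0 <= p * (5 - p) - 4) by nra.
  assert (p * (1 - p ^ 2 / 150) * (1 - p ^ 2 / 25) > 1).
  { replace (p * (1 - p ^ 2 / 150) * (1 - p ^ 2 / 25))
      with (p * (5 - p) * (5 + p) * (150 - p ^ 2) / 3750) by field.
    assert (4 * 8 <= p * (5 - p) * (5 + p)) by (apply Rmult_le_compat; lra).
    assert (4 * 8 * 134 <= p * (5 - p) * (5 + p) * (150 - p ^ 2))
      by (apply Rmult_le_compat; nra).
    lra. }
  assert (0 < 1 - p ^ 2 / 25) by nra.
  assert (0 <= p * (1 - p ^ 2 / 150)) by nra.
  nra.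
Qed.

(** * Lighthouse centers and mirror symmetry *)

Lemma center_angle n k : center n k =
  (INR n * cos (INR (2 * k) * (PI / INR n)), INR n * sin (INR (2 * k) * (PI / INR n))).
Proof.
  unfold center. rewrite mult_INR. cbn [INR].
  replace (2 * PI * INR k / INR n) with ((1 + 1) * INR k * (PI / INR n))
    by (unfold Rdiv; ring).
  reflexivity.
Qed.

Lemma center_0 n : center n 0 = (INR n, 0).
Proof.
  rewrite center_angle. cbn [INR Nat.mul]. rewrite Rmult_0_l, cos_0, sin_0.
  f_equal; ring.
Qed.

Definition reflect_axis (q : pt) : pt := (fst q, - snd q).

(* [L_(n-j)] is the mirror image of [L_j]; index [0] is its own mirror since
   [n - 0 = n] is not an index. *)
Definition mirror (n j : nat) : nat := match j with O => O | S _ => n - j end.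

Lemma reflect_axis_involutive q : reflect_axis (reflect_axis q) = q.
Proof. destruct q as [x y]. unfold reflect_axis; cbn. f_equal. ring. Qed.

Lemma mirror_lt n j : (j < n)%nat -> (mirror n j < n)%nat.
Proof. destruct j; cbn; lia. Qed.

Lemma mirror_involutive n j : (j < n)%nat -> mirror n (mirror n j) = j.
Proof. destruct j as [|j]; cbn; [easy|]. intros Hj. destruct (n - S j)%nat eqn:E; cbn; lia. Qed.

Lemma center_mirror n j : (j <= n)%nat -> center n (mirror n j) = reflect_axis (center n j).
Proof.
  intros Hj. unfold reflect_axis. destruct j as [|j]; cbn [mirror].
  - rewrite center_0. cbn. f_equal. ring.
  - rewrite !center_angle. cbn [fst snd].
    assert (HN : 0 < INR n) by (apply lt_0_INR; lia).
    replace (INR (2 * (n - S j)) * (PI / INR n)) with (2 * PI - INR (2 * S j) * (PI / INR n)).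
    + rewrite cos_minus, sin_minus, cos_2PI, sin_2PI. f_equal; ring.
    + rewrite !mult_INR, minus_INR by lia. cbn [INR]. field. lra.
Qed.

Lemma in_disk_mirror n j q : (j <= n)%nat ->
  in_disk n (mirror n j) (reflect_axis q) <-> in_disk n j q.
Proof.
  intros Hj. unfold in_disk. rewrite center_mirror by exact Hj.
  unfold reflect_axis; cbn [fst snd].
  replace ((- snd q - - snd (center n j)) ^ 2) with ((snd q - snd (center n j)) ^ 2) by ring.
  reflexivity.
Qed.

Definition seg_point (a b : pt) (t : R) : pt :=
  (fst a + t * (fst b - fst a), snd a + t * (snd b - snd a)).

Lemma seg_point_reflect a b t :
  seg_point (reflect_axis a) (reflect_axis b) t = reflect_axis (seg_point a b t).
Proof. unfold seg_point, reflect_axis; cbn. f_equal. ring. Qed.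

Lemma seg_meets_mirror n j a b : (j <= n)%nat ->
  seg_meets n (mirror n j) (reflect_axis a) (reflect_axis b) <-> seg_meets n j a b.
Proof.
  intros Hj. split; intros [t [Ht Hd]]; exists t; split; try exact Ht.
  - change (in_disk n (mirror n j) (seg_point (reflect_axis a) (reflect_axis b) t)) in Hd.
    rewrite seg_point_reflect, in_disk_mirror in Hd by exact Hj. exact Hd.
  - change (in_disk n (mirror n j) (seg_point (reflect_axis a) (reflect_axis b) t)).
    rewrite seg_point_reflect, in_disk_mirror by exact Hj. exact Hd.
Qed.

Lemma in_sector_mirror n k q : (k <= n)%nat ->
  in_sector n (mirror n k) (reflect_axis q) <-> in_sector n k q.
Proof.
  intros Hk. unfold in_sector. rewrite center_mirror by exact Hk.
  unfold reflect_axis; cbn [fst snd].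
  replace ((- snd q - - snd (center n k)) ^ 2) with ((snd q - snd (center n k)) ^ 2) by ring.
  replace ((- - snd (center n k)) ^ 2) with ((- snd (center n k)) ^ 2) by ring.
  replace ((- snd q - - snd (center n k)) * - - snd (center n k))
    with ((snd q - snd (center n k)) * - snd (center n k)) by ring.
  reflexivity.
Qed.

Lemma outside_all_reflect n q : outside_all n q -> outside_all n (reflect_axis q).
Proof.
  intros Hout k Hk Hd. apply (Hout (mirror n k)); [exact (mirror_lt n k Hk)|].
  rewrite <- (mirror_involutive n k Hk), in_disk_mirror in Hd
    by (apply Nat.lt_le_incl, mirror_lt, Hk).
  exact Hd.
Qed.

Lemma lit_by_mirror n k q : (k < n)%nat ->
  lit_by n k q -> lit_by n (mirror n k) (reflect_axis q).
Proof.
  intros Hk [Hsec Hfree]. split; [now apply in_sector_mirror; [lia|]|].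
  intros j Hj Hjk Hseg.
  assert (Hjn : (mirror n j < n)%nat) by exact (mirror_lt n j Hj).
  apply (Hfree (mirror n j) Hjn).
  - intros E. apply Hjk. rewrite <- E. symmetry. exact (mirror_involutive n j Hj).
  - rewrite <- (seg_meets_mirror n (mirror n j)) by lia.
    rewrite mirror_involutive, <- center_mirror by lia. exact Hseg.
Qed.

(** * Segments meeting a lighthouse disk *)

Lemma seg_meets_proj_le n j a b u v Y : u ^ 2 + v ^ 2 = 1 ->
  u * fst a + v * snd a <= Y -> u * fst b + v * snd b <= Y -> seg_meets n j a b ->
  u * fst (center n j) + v * snd (center n j) <= Y + 1.
Proof.
  intros Huv Ha Hb [t [Ht Hd]]. unfold in_disk in Hd. cbn [fst snd] in Hd.
  set (dx := fst a + t * (fst b - fst a) - fst (center n j)) in Hd.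
  set (dy := snd a + t * (snd b - snd a) - snd (center n j)) in Hd.
  assert (Hz : u * (fst a + t * (fst b - fst a)) + v * (snd a + t * (snd b - snd a)) <= Y).
  { replace (u * (fst a + t * (fst b - fst a)) + v * (snd a + t * (snd b - snd a)))
      with ((1 - t) * (u * fst a + v * snd a) + t * (u * fst b + v * snd b)) by ring.
    nra. }
  assert (Hcs : (u * dx + v * dy) ^ 2 <= 1).
  { assert (E : (u * dx + v * dy) ^ 2 + (u * dy - v * dx) ^ 2 = (u ^ 2 + v ^ 2) * (dx ^ 2 + dy ^ 2))
      by ring.
    rewrite Huv in E. pose proof (pow2_ge_0 (u * dy - v * dx)). lra. }
  assert (u * dx + v * dy >= -1) by nra.
  unfold dx, dy in *. lra.
Qed.

Lemma seg_meets_halfplane n j a b u v : ~ in_disk n j a ->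
  (forall z, in_disk n j z -> u * (fst z - fst a) + v * (snd z - snd a) <= 0) ->
  seg_meets n j a b -> u * (fst b - fst a) + v * (snd b - snd a) <= 0.
Proof.
  intros Ha Hdisk [t [Ht Hd]]. specialize (Hdisk _ Hd). cbn [fst snd] in Hdisk.
  assert (Ht0 : t <> 0).
  { intros ->. apply Ha. unfold in_disk in *. cbn [fst snd] in Hd.
    replace (fst a + 0 * (fst b - fst a)) with (fst a) in Hd by ring.
    replace (snd a + 0 * (snd b - snd a)) with (snd a) in Hd by ring. exact Hd. }
  replace (u * (fst a + t * (fst b - fst a) - fst a) + v * (snd a + t * (snd b - snd a) - snd a))
    with (t * (u * (fst b - fst a) + v * (snd b - snd a))) in Hdisk by ring.
  nra.
Qed.

Lemma seg_meets_far_end n j a b : ~ in_disk n j b -> seg_meets n j a b ->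
  (fst b - fst (center n j)) * (fst a - fst b) + (snd b - snd (center n j)) * (snd a - snd b) < 0.
Proof.
  intros Hb [t [Ht Hd]]. unfold in_disk in Hb, Hd. cbn [fst snd] in Hd.
  set (px := fst b - fst (center n j)) in *. set (py := snd b - snd (center n j)) in *.
  set (dx := fst a - fst b). set (dy := snd a - snd b).
  replace (fst a + t * (fst b - fst a) - fst (center n j)) with (px + (1 - t) * dx) in Hd
    by (unfold px, dx; ring).
  replace (snd a + t * (snd b - snd a) - snd (center n j)) with (py + (1 - t) * dy) in Hd
    by (unfold py, dy; ring).
  apply Rnot_le_lt in Hb. apply Rnot_le_lt. intros Hdot.
  assert (0 <= (1 - t) * (px * dx + py * dy)) by (apply Rmult_le_pos; lra).
  pose proof (pow2_ge_0 ((1 - t) * dx)). pose proof (pow2_ge_0 ((1 - t) * dy)).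
  nra.
Qed.

(** * Emission sectors *)

Lemma sin_le_of_between a x : 0 <= a <= PI / 2 -> a <= x <= PI - a -> sin a <= sin x.
Proof.
  intros Ha Hx. pose proof PI_RGT_0.
  destruct (Rle_dec x (PI / 2)).
  - apply sin_incr_1; lra.
  - rewrite <- (sin_PI_x x). apply sin_incr_1; lra.
Qed.

Lemma sin_mul_PI_div_le n a i : (0 < n)%nat -> (2 * a <= n)%nat -> (a <= i)%nat ->
  (i + a <= n)%nat -> sin (INR a * (PI / INR n)) <= sin (INR i * (PI / INR n)).
Proof.
  intros Hn H2a Hai Hia.
  apply le_INR in H2a, Hai, Hia. rewrite mult_INR, plus_INR in *. cbn [INR] in H2a.
  assert (HN : 0 < INR n) by (apply lt_0_INR; exact Hn).
  assert (Hh : 0 < PI / INR n) by (apply Rdiv_lt_0_compat; [exact PI_RGT_0 | exact HN]).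
  assert (HNh : INR n * (PI / INR n) = PI) by (field; lra).
  pose proof (pos_INR a).
  apply sin_le_of_between; nra.
Qed.

Lemma sqrt_cone_iff a b c s : 0 < c -> 0 < s -> s ^ 2 + c ^ 2 = 1 ->
  c * sqrt (a ^ 2 + b ^ 2) <= a <-> c * b <= s * a /\ - (c * b) <= s * a.
Proof.
  intros Hc Hs Hsc.
  pose proof (sqrt_pos (a ^ 2 + b ^ 2)) as Hr0.
  assert (Hr2 : sqrt (a ^ 2 + b ^ 2) ^ 2 = a ^ 2 + b ^ 2)
    by (apply pow2_sqrt; nra).
  set (r := sqrt (a ^ 2 + b ^ 2)) in *.
  assert (Ecr : (c * r) ^ 2 = c ^ 2 * (a ^ 2 + b ^ 2)) by (rewrite <- Hr2; ring).
  assert (Esa : (s * a) ^ 2 = a ^ 2 - c ^ 2 * a ^ 2)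
    by (replace ((s * a) ^ 2) with (s ^ 2 * a ^ 2) by ring;
        replace (s ^ 2) with (1 - c ^ 2) by lra; ring).
  split.
  - intros H. assert (Hcr : 0 <= c * r) by (apply Rmult_le_pos; lra).
    assert (H2 : (c * r) ^ 2 <= a ^ 2) by (apply pow_incr; lra).
    assert (Hb : (c * b) ^ 2 <= (s * a) ^ 2)
      by (rewrite Esa; rewrite Ecr in H2; replace ((c * b) ^ 2) with (c ^ 2 * b ^ 2) by ring; lra).
    assert (0 <= s * a) by (apply Rmult_le_pos; lra).
    split; nra.
  - intros [H1 H2]. assert (Ha : 0 <= s * a) by lra.
    assert (Hb : (c * b) ^ 2 <= (s * a) ^ 2) by nra.
    assert (H3 : (c * r) ^ 2 <= a ^ 2)
      by (rewrite Ecr; rewrite Esa in Hb;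
          replace ((c * b) ^ 2) with (c ^ 2 * b ^ 2) in Hb by ring; lra).
    assert (0 <= a) by nra. assert (0 <= c * r) by (apply Rmult_le_pos; lra).
    nra.
Qed.

(* The two conditions say that [q] lies on the inner side of the edge rays of
   the sector, the lines through [c_k] with angles [th + h] and [th - h]. *)
Lemma in_sector_iff n k q : (3 <= n)%nat ->
  let h := PI / INR n in
  let th := INR (2 * k) * h in
  in_sector n k q <->
  fst q * sin (th + h) - snd q * cos (th + h) <= INR n * sin h /\
  snd q * cos (th - h) - fst q * sin (th - h) <= INR n * sin h.
Proof.
  intros Hn h th. apply le_INR in Hn. cbn [INR] in Hn.
  assert (Hh : 0 < h < PI / 2).
  { unfold h. pose proof PI_RGT_0. split; [apply Rdiv_lt_0_compat; lra|].
    apply Rmult_lt_compat_l; [lra|]. apply Rinv_lt_contravar; lra. }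
  assert (Hc : 0 < cos h) by (apply cos_gt_0; lra).
  assert (Hs : 0 < sin h) by (apply sin_gt_0; lra).
  assert (Hsc : sin h ^ 2 + cos h ^ 2 = 1) by (pose proof (sin2_cos2 h); unfold Rsqr in *; lra).
  assert (Hsc' : sin th ^ 2 + cos th ^ 2 = 1) by (pose proof (sin2_cos2 th); unfold Rsqr in *; lra).
  unfold in_sector. rewrite center_angle. fold h th. cbn [fst snd].
  set (N := INR n) in *. set (x := fst q). set (y := snd q).
  set (a := N - (x * cos th + y * sin th)). set (b := y * cos th - x * sin th).
  replace ((x - N * cos th) ^ 2 + (y - N * sin th) ^ 2) with (a ^ 2 + b ^ 2)
    by (unfold a, b; nra).
  replace ((- (N * cos th)) ^ 2 + (- (N * sin th)) ^ 2) with (N ^ 2) by nra.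
  replace ((x - N * cos th) * - (N * cos th) + (y - N * sin th) * - (N * sin th))
    with (N * a) by (unfold a; nra).
  rewrite sqrt_pow2 by lra.
  rewrite sin_plus, cos_plus, sin_minus, cos_minus.
  transitivity (cos h * sqrt (a ^ 2 + b ^ 2) <= a).
  { split; intros H.
    - apply (Rmult_le_reg_l N); lra.
    - apply Rle_ge. replace (sqrt (a ^ 2 + b ^ 2) * N * cos h)
        with (N * (cos h * sqrt (a ^ 2 + b ^ 2))) by ring.
      apply Rmult_le_compat_l; lra. }
  rewrite (sqrt_cone_iff a b (cos h) (sin h) Hc Hs Hsc).
  unfold a, b. split; intros [H1 H2]; split; nra.
Qed.

Lemma snd_center_ge n a j : (0 < n)%nat -> (2 * a <= n)%nat -> (a <= 2 * j)%nat ->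
  (2 * j + a <= n)%nat -> INR n * sin (INR a * (PI / INR n)) <= snd (center n j).
Proof.
  intros Hn H2a Haj Hja. rewrite center_angle. cbn [snd].
  apply Rmult_le_compat_l; [apply pos_INR|].
  exact (sin_mul_PI_div_le n a (2 * j) Hn H2a Haj Hja).
Qed.

Lemma not_in_sector_0 n q : (3 <= n)%nat -> INR n < fst q -> ~ in_sector n 0 q.
Proof.
  intros Hn Hq. rewrite (in_sector_iff n 0 q Hn). cbn [INR Nat.mul].
  rewrite Rmult_0_l, Rplus_0_l, Rminus_0_l, sin_neg, cos_neg.
  apply le_INR in Hn. cbn [INR] in Hn.
  pose proof (sin_PI_div_pos (INR n) ltac:(lra)). intros [H1 H2]. nra.
Qed.

(** * The configuration for odd [n = 2m + 1] *)

Section OddConfiguration.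

Variables n m : nat.
Hypothesis Hn : n = (2 * m + 1)%nat.
Hypothesis Hm : (1 <= m)%nat.

Local Notation N := (INR n).
Local Notation h := (PI / INR n).

Lemma n_ge_3 : (3 <= n)%nat.
Proof. lia. Qed.

Lemma INR_n_ge_3 : 3 <= N.
Proof. pose proof (le_INR _ _ n_ge_3) as H. cbn [INR] in H. lra. Qed.

Lemma INR_n_ge_5 : (2 <= m)%nat -> 5 <= N.
Proof. intros H2. apply le_INR in H2. rewrite Hn, plus_INR, mult_INR. cbn [INR] in *. lra. Qed.

Lemma mirror_m : mirror n m = (m + 1)%nat.
Proof. destruct m as [|k]; cbn [mirror]; lia. Qed.

Lemma angle_m : INR (2 * m) * h = PI - h.
Proof.
  pose proof INR_n_ge_3.
  assert (E : INR (2 * m) = N - 1) by (rewrite Hn, plus_INR; cbn [INR]; ring).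
  rewrite E. field. lra.
Qed.

Lemma center_m : center n m = (- (N * cos h), N * sin h).
Proof.
  rewrite center_angle, angle_m, cos_minus, sin_minus, cos_PI, sin_PI. f_equal; ring.
Qed.

Lemma center_m_plus_1 : center n (m + 1) = reflect_axis (center n m).
Proof. rewrite <- mirror_m. apply center_mirror. lia. Qed.

Lemma tangent_region_reflect q : tangent_region n m q -> tangent_region n m (reflect_axis q).
Proof.
  intros [Hout [Hm0 Hm1]]. split; [exact (outside_all_reflect n q Hout)|].
  rewrite <- (seg_meets_mirror n 0) in Hm0, Hm1 by lia. cbn [mirror] in Hm0, Hm1.
  rewrite center_m_plus_1, reflect_axis_involutive in Hm1.
  rewrite <- center_m_plus_1 in Hm0. split; assumption.
Qed.

Lemma tangent_region_snd_le_1 q : tangent_region n m q -> snd q <= 1.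
Proof.
  intros [_ [Hseg _]]. apply Rnot_lt_le. intros Hq.
  pose proof (mul_sin_PI_div_gt N INR_n_ge_3) as HNS.
  assert (HY : 1 < Rmin (snd q) (N * sin h)) by (apply Rmin_glb_lt; lra).
  pose proof (Rmin_l (snd q) (N * sin h)). pose proof (Rmin_r (snd q) (N * sin h)).
  apply (seg_meets_proj_le n 0 (center n m) q 0 (-1) (- Rmin (snd q) (N * sin h))) in Hseg;
    rewrite ?center_m, ?center_0 in *; cbn [fst snd] in *; nra.
Qed.

Lemma tangent_region_fst_gt q : tangent_region n m q -> 0 <= snd q -> N < fst q.
Proof.
  intros Hq Hy. pose proof (tangent_region_snd_le_1 q Hq) as Hy1.
  destruct Hq as [Hout [Hseg _]].
  pose proof INR_n_ge_3. pose proof (cos_PI_div_ge_half N INR_n_ge_3).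
  pose proof (mul_sin_PI_div_gt N INR_n_ge_3).
  apply Rnot_le_lt. intros Hx.
  destruct (Rlt_le_dec (fst q) (- (N * cos h))) as [Hleft | Hright].
  - apply (seg_meets_proj_le n 0 (center n m) q 1 0 (- (N * cos h))) in Hseg;
      rewrite ?center_m, ?center_0 in *; cbn [fst snd] in *; nra.
  - apply seg_meets_far_end in Hseg; [|apply Hout; lia].
    rewrite center_m, center_0 in Hseg. cbn [fst snd] in Hseg. nra.
Qed.

Lemma tangent_region_bounds q : tangent_region n m q -> N < fst q /\ -1 <= snd q <= 1.
Proof.
  intros Hq. pose proof (tangent_region_reflect q Hq) as Hq'.
  pose proof (tangent_region_snd_le_1 q Hq). pose proof (tangent_region_snd_le_1 _ Hq') as H'.
  cbn [reflect_axis snd] in H'.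
  split; [|lra].
  destruct (Rle_lt_dec 0 (snd q)).
  - exact (tangent_region_fst_gt q Hq ltac:(lra)).
  - exact (tangent_region_fst_gt _ Hq' ltac:(cbn; lra)).
Qed.

Lemma tangent_region_witness : tangent_region n m (N + 3 / 2, 0).
Proof.
  pose proof INR_n_ge_3 as HN. pose proof (cos_PI_div_ge_half N HN) as HC.
  pose proof (sin_PI_div_pos N HN) as HS0. pose proof (SIN_bound h) as HS1.
  assert (Hseg : seg_meets n 0 (center n m) (N + 3 / 2, 0)).
  { assert (HD : 0 < N + 3 / 2 + N * cos h) by nra.
    (* the segment crosses the vertical line through [c_0] at height [s] *)
    set (t := N * (1 + cos h) / (N + 3 / 2 + N * cos h)).
    set (s := 3 / 2 * (N * sin h) / (N + 3 / 2 + N * cos h)).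
    assert (Ht : t * (N + 3 / 2 + N * cos h) = N * (1 + cos h)) by (unfold t; field; lra).
    assert (Hs : s * (N + 3 / 2 + N * cos h) = 3 / 2 * (N * sin h)) by (unfold s; field; lra).
    exists t. unfold in_disk. rewrite center_m, center_0. cbn [fst snd].
    replace (- (N * cos h) + t * (N + 3 / 2 - - (N * cos h)) - N) with 0 by lra.
    replace (N * sin h + t * (0 - N * sin h) - 0) with s by (unfold s, t; field; lra).
    assert (0 <= s <= 1) by (split; nra).
    split; [split; nra | nra]. }
  split; [|split; [exact Hseg|]].
  - intros k _ Hd. unfold in_disk in Hd. rewrite center_angle in Hd. cbn [fst snd] in Hd.
    set (th := INR (2 * k) * h) in Hd.
    pose proof (COS_bound th). pose proof (sin2_cos2 th) as E. unfold Rsqr in E.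
    assert (0 <= (N + 3 / 2) * N * (1 - cos th)) by (apply Rmult_le_pos; nra).
    nra.
  - rewrite <- (seg_meets_mirror n 0) in Hseg by lia. cbn [mirror] in Hseg.
    rewrite <- center_m_plus_1 in Hseg. unfold reflect_axis in Hseg. cbn [fst snd] in Hseg.
    replace (- 0) with 0 in Hseg by ring. exact Hseg.
Qed.

Lemma tangent_region_bounded :
  exists B, forall q, tangent_region n m q -> fst q ^ 2 + snd q ^ 2 <= B.
Proof.
  pose proof INR_n_ge_3 as HN. pose proof (cos_PI_div_ge_half N HN) as HC.
  pose proof (mul_sin_PI_div_gt N HN) as HNS.
  set (W := N + 1 + N * cos h).
  set (X := W * (N * sin h + 1) / (N * sin h - 1)).
  exists (X ^ 2 + 1). intros q Hq.
  destruct (tangent_region_bounds q Hq) as [Hx Hy].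
  destruct Hq as [_ [Hseg _]].
  (* the disk of [L_0] lies below the line through [c_m] and the corner [(N+1, 1)] *)
  apply (seg_meets_halfplane n 0 _ _ (N * sin h - 1) W) in Hseg.
  - rewrite center_m in Hseg. cbn [fst snd] in Hseg.
    assert (fst q <= X).
    { assert (HX : X * (N * sin h - 1) = W * (N * sin h + 1)) by (unfold X; field; lra).
      assert (0 <= (N * sin h - 1) * (N * cos h)) by (apply Rmult_le_pos; nra).
      assert (0 <= W * (snd q + 1)) by (apply Rmult_le_pos; unfold W; nra).
      assert ((N * sin h - 1) * (fst q - X) <= 0) by lra.
      nra. }
    nra.
  - unfold in_disk. rewrite center_m, center_0. cbn [fst snd]. nra.
  - intros z Hz. unfold in_disk in Hz. rewrite center_0 in Hz. rewrite center_m. cbn [fst snd] in *.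
    pose proof (pow2_ge_0 (fst z - N)). pose proof (pow2_ge_0 (snd z - 0)).
    assert (fst z <= N + 1) by nra. assert (snd z <= 1) by nra.
    assert (0 <= (N * sin h - 1) * (N + 1 - fst z)) by (apply Rmult_le_pos; lra).
    assert (0 <= W * (1 - snd z)) by (apply Rmult_le_pos; unfold W; nra).
    unfold W in *. lra.
Qed.

Lemma not_in_sector_of_lt_m k q : (1 <= k)%nat -> (k + 1 <= m)%nat ->
  N < fst q -> -1 <= snd q <= 1 -> ~ in_sector n k q.
Proof.
  intros Hk1 Hkm Hx Hy. rewrite (in_sector_iff n k q n_ge_3). intros [Hedge _].
  assert (HN5 : 5 <= N) by (apply INR_n_ge_5; lia).
  pose proof (mul_sin_PI_div_twice_cos_gt N HN5) as Hkey.
  pose proof (sin_PI_div_pos N INR_n_ge_3) as HS.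
  replace (INR (2 * k) * h + h) with (INR (2 * k + 1) * h) in Hedge
    by (rewrite plus_INR; cbn [INR]; ring).
  assert (Hsin : sin (INR 2 * h) <= sin (INR (2 * k + 1) * h))
    by (apply sin_mul_PI_div_le; lia).
  replace (INR 2 * h) with (2 * h) in Hsin by (cbn [INR]; ring).
  rewrite sin_2a in Hsin.
  pose proof (COS_bound (INR (2 * k + 1) * h)) as Hc.
  assert (snd q * cos (INR (2 * k + 1) * h) <= 1).
  { assert (0 <= (1 - snd q) * (1 + cos (INR (2 * k + 1) * h))) by (apply Rmult_le_pos; lra).
    assert (0 <= (1 + snd q) * (1 - cos (INR (2 * k + 1) * h))) by (apply Rmult_le_pos; lra).
    lra. }
  assert (N * (2 * sin h * cos h) < fst q * sin (INR (2 * k + 1) * h)).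
  { apply Rle_lt_trans with (N * sin (INR (2 * k + 1) * h)).
    - apply Rmult_le_compat_l; lra.
    - apply Rmult_lt_compat_r; [|lra]. pose proof (cos_PI_div_ge_half N INR_n_ge_3). nra. }
  nra.
Qed.

Lemma tangent_region_not_lit_by_le q k : tangent_region n m q -> (k <= m + 1)%nat -> ~ lit_by n k q.
Proof.
  intros Hq Hk [Hsec Hfree]. destruct (tangent_region_bounds q Hq) as [Hx Hy].
  destruct Hq as [_ [Hm0 Hm1]].
  destruct (Nat.eq_dec k 0) as [->|Hk0]; [exact (not_in_sector_0 n q n_ge_3 Hx Hsec)|].
  destruct (Nat.eq_dec k m) as [->|Hkm]; [exact (Hfree 0%nat ltac:(lia) ltac:(lia) Hm0)|].
  destruct (Nat.eq_dec k (m + 1)) as [->|Hkm1]; [exact (Hfree 0%nat ltac:(lia) ltac:(lia) Hm1)|].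
  exact (not_in_sector_of_lt_m k q ltac:(lia) ltac:(lia) Hx Hy Hsec).
Qed.

Lemma tangent_region_dark q : tangent_region n m q -> dark n q.
Proof.
  intros Hq. split; [exact (proj1 Hq)|]. intros k Hk Hlit.
  destruct (Nat.le_gt_cases k (m + 1)) as [Hle | Hgt].
  - exact (tangent_region_not_lit_by_le q k Hq Hle Hlit).
  - apply (tangent_region_not_lit_by_le (reflect_axis q) (mirror n k)).
    + exact (tangent_region_reflect q Hq).
    + destruct k; cbn [mirror]; lia.
    + exact (lit_by_mirror n k q Hk Hlit).
Qed.

Lemma lit_by_m_unless_shadowed q : N - 1 / 4 < fst q -> -5 / 4 < snd q < 5 / 4 ->
  ~ seg_meets n 0 (center n m) q -> lit_by n m q.
Proof.
  intros Hx Hy Hfree0.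
  pose proof INR_n_ge_3 as HN. pose proof (mul_sin_PI_div_gt N HN) as HNS.
  pose proof (sin_PI_div_pos N HN) as HS.
  split.
  - rewrite (in_sector_iff n m q n_ge_3).
    rewrite angle_m.
    replace (PI - h + h) with PI by ring. replace (PI - h - h) with (PI - 2 * h) by ring.
    rewrite sin_PI, cos_PI, sin_PI_x, cos_minus, cos_PI, sin_PI.
    destruct (PI_div_bounds N HN) as [Hh _].
    assert (H2h : 0 <= sin (2 * h)) by (apply sin_ge_0; pose proof PI_RGT_0; lra).
    assert (0 <= fst q * sin (2 * h)) by (apply Rmult_le_pos; lra).
    pose proof (COS_bound (2 * h)) as Hc.
    assert (0 <= (5 / 4 - snd q) * (1 - cos (2 * h))) by (apply Rmult_le_pos; lra).
    assert (0 <= (5 / 4 + snd q) * (1 + cos (2 * h))) by (apply Rmult_le_pos; lra).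
    split; lra.
  - intros j Hj Hjm Hseg.
    destruct (Nat.eq_dec j 0) as [->|Hj0]; [exact (Hfree0 Hseg)|].
    destruct (Nat.le_gt_cases j m) as [Hle | Hgt].
    +       assert (HN5 : 5 <= N) by (apply INR_n_ge_5; lia).
      pose proof (mul_sin_PI_div_twice_cos_gt N HN5).
      assert (Hj2 : N * sin (INR 2 * h) <= snd (center n j)) by (apply snd_center_ge; lia).
      replace (INR 2 * h) with (2 * h) in Hj2 by (cbn [INR]; ring). rewrite sin_2a in Hj2.
      apply (seg_meets_proj_le n j (center n m) q 0 1 (N * sin h)) in Hseg;
        rewrite ?center_m in *; cbn [fst snd] in *; nra.
    + assert (Hmj : N * sin (INR 1 * h) <= snd (center n (mirror n j)))
        by (apply snd_center_ge; destruct j; cbn [mirror]; lia).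
      rewrite center_mirror in Hmj by lia. unfold reflect_axis in Hmj.
      cbn [snd INR] in Hmj. rewrite Rmult_1_l in Hmj.
      apply (seg_meets_proj_le n j (center n m) q 0 (-1) (5 / 4)) in Hseg;
        rewrite ?center_m in *; cbn [fst snd] in *; nra.
Qed.

Lemma not_dark_near_tangent_region : exists eps, eps > 0 /\
  forall q, outside_all n q -> ~ tangent_region n m q ->
    (exists p, tangent_region n m p /\ (fst q - fst p) ^ 2 + (snd q - snd p) ^ 2 < eps ^ 2) ->
    ~ dark n q.
Proof.
  exists (1 / 4). split; [lra|].
  intros q Hout Hnot [p [Hp Hclose]] [_ Hunlit].
  destruct (tangent_region_bounds p Hp) as [Hpx Hpy].
  pose proof (pow2_ge_0 (fst q - fst p)). pose proof (pow2_ge_0 (snd q - snd p)).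
  assert (Hx : N - 1 / 4 < fst q) by nra.
  assert (Hy : -5 / 4 < snd q < 5 / 4) by (split; nra).
  destruct (classic (seg_meets n 0 (center n m) q)) as [Hm0 | Hm0].
  - assert (Hm1 : ~ seg_meets n 0 (center n (m + 1)) q)
      by (intros Hm1; exact (Hnot (conj Hout (conj Hm0 Hm1)))).
    apply (Hunlit (m + 1)%nat); [lia|].
    rewrite <- mirror_m, <- (reflect_axis_involutive q).
    apply lit_by_mirror; [lia|].
    apply lit_by_m_unless_shadowed; cbn [reflect_axis fst snd]; [lra | lra |].
    rewrite <- (seg_meets_mirror n 0), reflect_axis_involutive, <- center_m_plus_1 by lia.
    exact Hm1.
  - exact (Hunlit m ltac:(lia) (lit_by_m_unless_shadowed q Hx Hy Hm0)).
Qed.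

End OddConfiguration.

Theorem mainTheorem2 (n m : nat) (Hn : n = (2 * m + 1)%nat) (Hm : (1 <= m)%nat) :
  (* the region is nonempty and finite (bounded) *)
  (exists q, tangent_region n m q) /\
  (exists B, forall q, tangent_region n m q -> fst q ^ 2 + snd q ^ 2 <= B) /\
  (* every point of the region is dark *)
  (forall q, tangent_region n m q -> dark n q) /\
  (* the region is exactly the dark region there: all points outside the
     disks, near the region but not in it, are lit (so no other lighthouse
     contributes to its boundary) *)
  (exists eps, eps > 0 /\
     forall q, outside_all n q -> ~ tangent_region n m q ->
       (exists p, tangent_region n m p /\
          (fst q - fst p) ^ 2 + (snd q - snd p) ^ 2 < eps ^ 2) ->
       ~ dark n q).
Proof.
  split; [exact (ex_intro _ _ (tangent_region_witness n m Hn Hm))|].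
  split; [exact (tangent_region_bounded n m Hn Hm)|].
  split; [exact (tangent_region_dark n m Hn Hm)|].
  exact (not_dark_near_tangent_region n m Hn Hm).
Qed.
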